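(* Consider the algorithm AILFEM described in the context, with arbitrary parameters $0<\theta\le 1$, $C_{\mathrm{mark}}\ge 1$, $\lambda_{\mathrm{lin}},\lambda_{\mathrm{alg}}>0$, $i_{\min}\in\mathbb{N}$, $\delta>0$ and an initial guess $u_0^{0,0}\in\mathcal{X}_0$ with $|||u_0^{0,0}|||\le 2M$. Then, independently of the adaptivity parameters $\theta$, $\lambda_{\mathrm{lin}}$ and $\lambda_{\mathrm{alg}}$, the $i$-loop of the algorithm always terminates, i.e., $\underline{i}[\ell,k]<\infty$ for all $(\ell,k,0)\in\mathcal{Q}$.
   Context: Abstract setting. Let $\mathcal{X}$ be a real Hilbert space with scalar product $\langle\!\langle\cdot,\cdot\rangle\!\rangle$ and norm $|||\cdot|||$, with dual space $\mathcal{X}'$ (norm $\|\cdot\|_{\mathcal{X}'}$, duality bracket $\langle\cdot,\cdot\rangle$). Let $\mathcal{A}:\mathcal{X}\to\mathcal{X}'$ be a nonlinear operator and $F\in\mathcal{X}'$ with $\mathcal{A}0\neq F$. Assume: (SM) there is $\alpha>0$ with $\alpha|||v-w|||^2\le\langle\mathcal{A}v-\mathcal{A}w,v-w\rangle$ for all $v,w\in\mathcal{X}$; (LIP) for every $\vartheta>0$ there is $L[\vartheta]>0$ with $\langle\mathcal{A}v-\mathcal{A}w,\varphi\rangle\le L[\vartheta]\,|||v-w|||\,|||\varphi|||$ for all $v,w,\varphi\in\mathcal{X}$ with $\max\{|||v|||,|||v-w|||\}\le\vartheta$; (POT) there is a Gâteaux differentiable $\mathcal{P}:\mathcal{X}\to\mathbb{R}$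 with $\langle\mathcal{A}w,v\rangle=\lim_{t\to0}(\mathcal{P}(w+tv)-\mathcal{P}(w))/t$ for all $v,w$. The energy is $\mathcal{E}(v):=\mathcal{P}(v)-F(v)$. For every closed subspace $\mathcal{Y}\subseteq\mathcal{X}$ there is a unique $u^\star_{\mathcal{Y}}\in\mathcal{Y}$ with $\langle\mathcal{A}u^\star_{\mathcal{Y}},v\rangle=F(v)$ for all $v\in\mathcal{Y}$; $u^\star:=u^\star_{\mathcal{X}}$. Put $M:=\|F-\mathcal{A}0\|_{\mathcal{X}'}/\alpha$. Meshes. $\mathcal{T}_0$ is an initial conforming simplicial triangulation; $\mathtt{refine}(\mathcal{T}_H,\mathcal{M}_H)$ is the coarsest newest-vertex-bisection (NVB) refinement of $\mathcal{T}_H$ in which all elements of $\mathcal{M}_H\subseteq\mathcal{T}_H$ are refined; $\mathbb{T}(\mathcal{T}_H)$ is the set of meshes obtained from $\mathcal{T}_H$ by finitely many NVB steps, $\mathbb{T}:=\mathbb{T}(\mathcal{T}_0)$. Each $\mathcal{T}_H\in\mathbb{T}$ is associated with a finite-dimensional subspace $\mathcal{X}_H\subset\mathcal{X}$, nested: $\mathcal{X}_H\subseteq\mathcal{X}_h$ if $\mathcal{T}_h\in\mathbb{T}(\mathcal{T}_H)$. Write $u_H^\star:=u^\star_{\mathcal{X}_H}$. Zarantonello map: for $\delta>0$, $w_H\in\mathcal{X}_H$, $\Phi_H(\delta;w_H)\in\mathcal{X}_H$ is the unique solution of $\langle\!\langle\Phi_H(\delta;w_H),v_H\rangle\!\rangle=\langle\!\langle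 w_H,v_H\rangle\!\rangle+\delta[F(v_H)-\langle\mathcal{A}w_H,v_H\rangle]$ for all $v_H\in\mathcal{X}_H$. Algebraic solver: there is $0<q_{\mathrm{alg}}<1$ and for each $\mathcal{T}_H$ a map $\Psi_H:\mathcal{X}'\times\mathcal{X}_H\to\mathcal{X}_H$ such that for every $\varphi\in\mathcal{X}'$, with $w_H^\star\in\mathcal{X}_H$ solving $\langle\!\langle w_H^\star,v_H\rangle\!\rangle=\varphi(v_H)$ for all $v_H\in\mathcal{X}_H$, one has $|||w_H^\star-\Psi_H(\varphi;w_H)|||\le q_{\mathrm{alg}}|||w_H^\star-w_H|||$ for all $w_H\in\mathcal{X}_H$. One writes $\Psi_H(w_H^\star;\cdot)$ for $\Psi_H(\varphi;\cdot)$. Estimator: for $\mathcal{T}_H\in\mathbb{T}$, $T\in\mathcal{T}_H$, $v_H\in\mathcal{X}_H$ a number $\eta_H(T,v_H)\ge0$ is given; $\eta_H(\mathcal{U},v_H):=(\sum_{T\in\mathcal{U}}\eta_H(T,v_H)^2)^{1/2}$ for $\mathcal{U}\subseteq\mathcal{T}_H$ and $\eta_H(v_H):=\eta_H(\mathcal{T}_H,v_H)$. Index $\ell$ refers to $\mathcal{T}_\ell$, $\mathcal{X}_\ell$, $\Phi_\ell$, $\Psi_\ell$, $\eta_\ell$, $u_\ell^\star$. Algorithm AILFEM. Input: $\mathcal{T}_0$, $0<\theta\le1$, $C_{\mathrm{mark}}\ge1$, $\lambda_{\mathrm{lin}},\lambda_{\mathrm{alg}}>0$, $i_{\min}\in\mathbb{N}$,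 $\delta>0$, $u_0^{0,0}\in\mathcal{X}_0$ with $|||u_0^{0,0}|||\le2M$; set $u_0^{0,\star}:=u_0^{0,\underline{i}}:=u_0^{0,0}$. For $\ell=0,1,2,\dots$: (I) For $k=1,2,\dots$: set $u_\ell^{k,0}:=u_\ell^{k-1,\underline{i}}$ and $u_\ell^{k,\star}:=\Phi_\ell(\delta;u_\ell^{k-1,\underline{i}})$ (not computed). For $i=1,2,\dots$: compute $u_\ell^{k,i}:=\Psi_\ell(u_\ell^{k,\star};u_\ell^{k,i-1})$ and $\eta_\ell(u_\ell^{k,i})$; terminate the $i$-loop with $\underline{i}[\ell,k]:=i$ if $|||u_\ell^{k,i-1}-u_\ell^{k,i}|||\le\lambda_{\mathrm{alg}}[\lambda_{\mathrm{lin}}\eta_\ell(u_\ell^{k,i})+|||u_\ell^{k,i}-u_\ell^{k,0}|||]$ and $i_{\min}\le i$. Write $u_\ell^{k,\underline{i}}:=u_\ell^{k,\underline{i}[\ell,k]}$. Terminate the $k$-loop with $\underline{k}[\ell]:=k$ if $\mathcal{E}(u_\ell^{k,0})-\mathcal{E}(u_\ell^{k,\underline{i}})\le\lambda_{\mathrm{lin}}^2\eta_\ell(u_\ell^{k,\underline{i}})^2$ and $|||u_\ell^{k,\underline{i}}|||\le2M$. (II) Choose $\mathcal{M}_\ell\subseteq\mathcal{T}_\ell$ with $\theta\,\eta_\ell(u_\ell^{\underline{k},\underline{i}})^2\le\eta_\ell(\mathcal{M}_\ell,u_\ell^{\underline{k},\underline{i}})^2$ and $\#\mathcal{M}_\ell\le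 C_{\mathrm{mark}}\min\{\#\mathcal{U}:\mathcal{U}\subseteq\mathcal{T}_\ell,\ \theta\eta_\ell(u_\ell^{\underline{k},\underline{i}})^2\le\eta_\ell(\mathcal{U},u_\ell^{\underline{k},\underline{i}})^2\}$. (III) $\mathcal{T}_{\ell+1}:=\mathtt{refine}(\mathcal{T}_\ell,\mathcal{M}_\ell)$ and $u_{\ell+1}^{0,0}:=u_{\ell+1}^{0,\underline{i}}:=u_{\ell+1}^{0,\star}:=u_\ell^{\underline{k},\underline{i}}$. Index set: $\mathcal{Q}:=\{(\ell,k,i)\in\mathbb{N}_0^3: u_\ell^{k,i}\text{ is used in the algorithm}\}$, and $\underline{i}[\ell,k]:=\sup\{i\in\mathbb{N}:(\ell,k,i)\in\mathcal{Q}\}\in\mathbb{N}\cup\{\infty\}$. *)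

From HB Require Import structures.
From mathcomp Require Import all_boot all_order all_algebra.
From mathcomp Require Import all_classical all_reals all_analysis.
Set Implicit Arguments. Unset Strict Implicit. Unset Printing Implicit Defensive.
Import Order.TTheory GRing.Theory Num.Theory.
Local Open Scope classical_set_scope.
Local Open Scope ring_scope.

Section AILFEM.
Variables (R : realType) (V : lmodType R).

Variable ip : V -> V -> R.

Definition hnorm (v : V) : R := Num.sqrt (ip v v).

Definition is_real_hilbert : Prop :=
  [/\ (forall u v, ip u v = ip v u),
      (forall a u v w, ip (a *: u + v) w = a * ip u w + ip v w),
      (forall v, v != 0 -> 0 < ip v v),
      (forall v, 0 <= ip v v) &
      (forall u : nat -> V,
         (forall e : R, 0 < e -> exists N, forall m n, (N <= m)%N -> (N <= n)%N ->
            hnorm (u m - u n) < e) ->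
         exists x, forall e : R, 0 < e -> exists N, forall n, (N <= n)%N ->
            hnorm (u n - x) < e)].

Definition in_dual (f : V -> R) : Prop :=
  (forall a u v, f (a *: u + v) = a * f u + f v) /\
  exists C : R, forall v, `|f v| <= C * hnorm v.

Definition dual_norm (f : V -> R) : R :=
  sup [set `|f v| | v in [set v | hnorm v <= 1]].

Definition fin_dim_subspace (S : set V) : Prop :=
  exists (n : nat) (b : 'I_n -> V),
    S = [set v | exists c : 'I_n -> R, v = \sum_(j < n) c j *: b j].

Variables (Tm : Type) (Elt : Tm -> finType)
  (refine : forall T : Tm, {set Elt T} -> Tm).

Inductive refines : Tm -> Tm -> Prop :=
| refines_refl T : refines T T
| refines_step T (Mk : {set Elt T}) T' : refines (@refine T Mk) T' -> refines T T'.

Variable eta : forall T : Tm, Elt T -> V -> R.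

Definition eta_on (T : Tm) (U : {set Elt T}) (v : V) : R :=
  Num.sqrt (\sum_(t in U) eta t v ^+ 2).
Definition eta_all (T : Tm) (v : V) : R := eta_on [set: Elt T] v.

Variables (A : V -> V -> R) (F : V -> R) (P : V -> R)
  (Psi : Tm -> (V -> R) -> V -> V)
  (T0 : Tm) (u0 : V)
  (theta Cmark lam_lin lam_alg delta M : R) (imin : nat).

Definition energy (v : V) : R := P v - F v.

(* functional v |-> <<w,v>> + delta [F(v) - <A w, v>] defining Phi(delta; w) *)
Definition zar_rhs (w : V) : V -> R := fun v => ip w v + delta * (F v - A w v).

(* u^{k,i}, i = 0,1,2,..., of the i-loop started from u^{k,0} = w *)
Fixpoint alg_iter (T : Tm) (w : V) (i : nat) : V :=
  match i with
  | 0 => w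
  | i'.+1 => Psi T (zar_rhs w) (alg_iter T w i')
  end.

Definition i_stop (T : Tm) (w : V) (i : nat) : Prop :=
  [/\ (1 <= i)%N, (imin <= i)%N &
      hnorm (alg_iter T w i.-1 - alg_iter T w i)
        <= lam_alg * (lam_lin * eta_all T (alg_iter T w i) + hnorm (alg_iter T w i - w))].

Definition i_stops_at (T : Tm) (w : V) (i : nat) : Prop :=
  i_stop T w i /\ forall j, (j < i)%N -> ~ i_stop T w j.

(* stopping criterion of the k-loop, with u^{k,0} = w, u^{k,i_} = u *)
Definition k_stop (w u : V) (T : Tm) : Prop :=
  energy w - energy u <= lam_lin ^+ 2 * eta_all T u ^+ 2 /\ hnorm u <= 2 * M.

Definition dorfler (T : Tm) (u : V) (U : {set Elt T}) : Prop :=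
  theta * eta_all T u ^+ 2 <= eta_on U u ^+ 2.
Definition admissible_marking (T : Tm) (u : V) (Mk : {set Elt T}) : Prop :=
  dorfler u Mk /\
  forall U : {set Elt T}, dorfler u U -> (#|Mk|%:R : R) <= Cmark * (#|U|%:R).

(* reached l k T w : the algorithm (for some admissible choice of the marked
   sets) enters the i-loop at level l, step k >= 1, on mesh T_l = T, with
   u_l^{k,0} = w; i.e. (l,k,0) \in Q with k >= 1. *)
Inductive reached : nat -> nat -> Tm -> V -> Prop :=
| reached_start : reached 0 1 T0 u0
| reached_next_k l k T w i :
    reached l k T w -> i_stops_at T w i ->
    ~ k_stop w (alg_iter T w i) T ->
    reached l k.+1 T (alg_iter T w i)
| reached_next_l l k T w i (Mk : {set Elt T}) :
    reached l k T w -> i_stops_at T w i ->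
    k_stop w (alg_iter T w i) T ->
    admissible_marking (alg_iter T w i) Mk ->
    reached l.+1 1 (@refine T Mk) (alg_iter T w i).

End AILFEM.

(** Once the i-loop is entered at [u^{k,0} = w] on a mesh [T], the iterates
  [u^{k,i}] contract to the Galerkin solution [w*] of the Zarantonello
  step, [|||w* - u^{k,i}||| <= q^i |||w* - w|||]; the solution exists since
  [X_T] is finite-dimensional (Riesz representation) and [w] stays in [X_T]
  along the algorithm.  Hence the increments [|||u^{k,i-1} - u^{k,i}|||]
  are [O(q^i) |||w* - w|||], while [|||u^{k,i} - w|||] is at least
  [(1 - q^i) |||w* - w|||]; as soon as [q^i (2 + lam_alg) <= lam_alg] the
  stopping criterion holds, whatever the estimator. *)

From mathcomp Require Import all_boot all_order all_algebra.
From mathcomp Require Import all_classical all_reals all_analysis.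
From mathcomp Require Import lra ring.
Import Order.TTheory GRing.Theory Num.Theory numFieldNormedType.Exports.
Local Open Scope classical_set_scope.
Local Open Scope ring_scope.
Set Implicit Arguments. Unset Strict Implicit. Unset Printing Implicit Defensive.

Section InnerProductSpace.
Variables (R : realType) (V : lmodType R) (ip : V -> V -> R).
Hypotheses (ipC : forall u v, ip u v = ip v u)
  (ip_linear : forall a u v w, ip (a *: u + v) w = a * ip u w + ip v w)
  (ip_gt0 : forall v, v != 0 -> 0 < ip v v)
  (ip_ge0 : forall v, 0 <= ip v v).

Lemma ipDl u v w : ip (u + v) w = ip u w + ip v w.
Proof. by rewrite -{1}[u]scale1r ip_linear mul1r. Qed.

Lemma ip0l w : ip 0 w = 0.
Proof. by have := ipDl 0 0 w; rewrite addr0; lra. Qed.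

Lemma ipZl a u w : ip (a *: u) w = a * ip u w.
Proof. by rewrite -[a *: u]addr0 ip_linear ip0l addr0. Qed.

Lemma ipNl u w : ip (- u) w = - ip u w.
Proof. by rewrite -scaleN1r ipZl mulN1r. Qed.

Lemma ipBl u v w : ip (u - v) w = ip u w - ip v w.
Proof. by rewrite ipDl ipNl. Qed.

Lemma ip0r w : ip w 0 = 0.
Proof. by rewrite ipC ip0l. Qed.

Lemma ipDr u v w : ip w (u + v) = ip w u + ip w v.
Proof. by rewrite !(ipC w) ipDl. Qed.

Lemma ipZr a u w : ip w (a *: u) = a * ip w u.
Proof. by rewrite !(ipC w) ipZl. Qed.

Lemma ipNr u w : ip w (- u) = - ip w u.
Proof. by rewrite !(ipC w) ipNl. Qed.

Lemma ipBr u v w : ip w (u - v) = ip w u - ip w v.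
Proof. by rewrite ipDr ipNr. Qed.

Lemma ipDD u v : ip (u + v) (u + v) = ip u u + 2 * ip u v + ip v v.
Proof. by rewrite ipDl !ipDr (ipC v u); ring. Qed.

Lemma ipBB u v : ip (u - v) (u - v) = ip u u - 2 * ip u v + ip v v.
Proof. by rewrite ipBl !ipBr (ipC v u); ring. Qed.

Lemma ip_CauchySchwarz u v : ip u v ^+ 2 <= ip u u * ip v v.
Proof.
have [->|v_neq0] := eqVneq v 0; first by rewrite ip0l !ip0r expr0n mulr0.
rewrite -subr_ge0 -(pmulr_rge0 _ (ip_gt0 v_neq0)).
have := ip_ge0 (ip v v *: u - ip u v *: v).
rewrite ipBB !ipZl !ipZr; congr (0 <= _); ring.
Qed.

Lemma hnorm_ge0 v : 0 <= hnorm ip v.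
Proof. exact: sqrtr_ge0. Qed.

Lemma hnorm_sqr v : hnorm ip v ^+ 2 = ip v v.
Proof. exact: sqr_sqrtr. Qed.

Lemma ip_norm_le u v : `|ip u v| <= hnorm ip u * hnorm ip v.
Proof.
rewrite -ler_sqr ?nnegrE ?mulr_ge0 ?hnorm_ge0 //.
by rewrite real_normK ?num_real // exprMn !hnorm_sqr ip_CauchySchwarz.
Qed.

Lemma hnormD u v : hnorm ip (u + v) <= hnorm ip u + hnorm ip v.
Proof.
rewrite -ler_sqr ?nnegrE ?addr_ge0 ?hnorm_ge0 // hnorm_sqr ipDD.
have := le_trans (ler_norm _) (ip_norm_le u v).
rewrite -!hnorm_sqr; nra.
Qed.

Lemma hnormN v : hnorm ip (- v) = hnorm ip v.
Proof. by rewrite /hnorm ipNl ipNr opprK. Qed.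

Lemma hnorm_distC u v : hnorm ip (u - v) = hnorm ip (v - u).
Proof. by rewrite -hnormN opprB. Qed.

Lemma hnorm_distD u v w : hnorm ip (v - w) <= hnorm ip (v - u) + hnorm ip (u - w).
Proof. by have := hnormD (v - u) (u - w); rewrite addrA subrK. Qed.

Definition linear_functional (f : V -> R) :=
  forall a u v, f (a *: u + v) = a * f u + f v.

Definition lincomb_closed (S : set V) :=
  forall a u v, S u -> S v -> S (a *: u + v).

Definition has_riesz_repr (S : set V) :=
  forall phi, linear_functional phi ->
  exists2 ws, S ws & forall v, S v -> ip ws v = phi v.

Definition span_of n (b : 'I_n -> V) : set V :=
  [set v | exists c : 'I_n -> R, v = \sum_(j < n) c j *: b j].

Definition span_add (S : set V) (b : V) : set V :=
  [set v | exists a, exists2 s, S s & v = a *: b + s].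

Lemma linear_functional0 phi : linear_functional phi -> phi 0 = 0.
Proof. by move=> phi_lin; have := phi_lin 1 0 0; rewrite scale1r addr0 mul1r; lra. Qed.

Lemma linear_functional_ip w : linear_functional (ip w).
Proof. by move=> a u v; rewrite ipDr ipZr. Qed.

Lemma lincomb_closed_span n (b : 'I_n -> V) : lincomb_closed (span_of b).
Proof.
move=> a _ _ [c ->] [d ->]; exists (fun j => a * c j + d j).
rewrite scaler_sumr -big_split /=; apply: eq_bigr => j _.
by rewrite scalerDl scalerA.
Qed.

Lemma span_of_ord_recl n (b : 'I_n.+1 -> V) :
  span_of b = span_add (span_of (fun j => b (lift ord0 j))) (b ord0).
Proof.
apply/seteqP; split=> v.
  move=> [c ->]; exists (c ord0).
  by exists (\sum_(j < n) c (lift ord0 j) *: b (lift ord0 j));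
    [exists (fun j => c (lift ord0 j)) | rewrite big_ord_recl].
move=> [a [s [c ->] ->]].
exists (fun j => if unlift ord0 j is Some j' then c j' else a).
rewrite big_ord_recl unlift_none; congr (_ + _).
by apply: eq_bigr => j _; rewrite liftK.
Qed.

(* One Gram-Schmidt step: [r = b - p] is orthogonal to [S], where [p]
   represents [ip b] on [S]. *)
Lemma has_riesz_repr_add S b :
  lincomb_closed S -> has_riesz_repr S -> has_riesz_repr (span_add S b).
Proof.
move=> S_closed S_repr phi phi_lin.
have [p Sp p_repr] := S_repr _ (linear_functional_ip b).
have [w' Sw' w'_repr] := S_repr _ phi_lin.
set r := b - p.
have r_orth s : S s -> ip r s = 0 by move=> Ss; rewrite ipBl p_repr ?subrr.
set t := (phi b - ip w' b) / ip r r.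
have repr_b : ip w' b + t * ip r r = phi b.
  have [r0|r_neq0] := eqVneq r 0.
    have -> : b = p by apply/eqP; rewrite -subr_eq0 -/r r0.
    by rewrite r0 ip0l mulr0 addr0 w'_repr.
  by rewrite divfK ?gt_eqF ?ip_gt0 // addrC subrK.
exists (w' + t *: r).
  exists t, ((- t) *: p + w'); first exact: S_closed.
  by rewrite /r scalerBr scaleNr addrC -addrA.
move=> _ [a [s Ss ->]].
have ip_r_b : ip r b = ip r r by rewrite -[in LHS](subrK p b) ipDr (r_orth p Sp) addr0.
by rewrite ipDr !ipZr !ipDl !ipZl ip_r_b (r_orth s Ss) (w'_repr s Ss) repr_b
  (phi_lin a b s) mulr0 addr0.
Qed.

Lemma has_riesz_repr_span n (b : 'I_n -> V) : has_riesz_repr (span_of b).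
Proof.
elim: n b => [|n IHn] b.
  move=> phi phi_lin; exists 0; first by exists (fun=> 0); rewrite big_ord0.
  by move=> _ [c ->]; rewrite big_ord0 ip0l linear_functional0.
rewrite span_of_ord_recl; apply: has_riesz_repr_add => //.
exact: lincomb_closed_span.
Qed.

Lemma fin_dim_riesz S : fin_dim_subspace S -> has_riesz_repr S.
Proof. by move=> [n [b ->]]; apply: has_riesz_repr_span. Qed.

Lemma in_dual_ip w : in_dual ip (ip w).
Proof.
split; first exact: linear_functional_ip.
by exists (hnorm ip w) => v; apply: ip_norm_le.
Qed.

Lemma in_dualDZ c f g :
  in_dual ip f -> in_dual ip g -> in_dual ip (fun v => f v + c * g v).
Proof.
move=> [f_lin [Cf f_bd]] [g_lin [Cg g_bd]]; split.
  by move=> a u v; rewrite f_lin g_lin; ring.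
exists (Cf + `|c| * Cg) => v; rewrite mulrDl -mulrA.
apply: le_trans (ler_normD _ _) _; rewrite normrM.
by apply: lerD; rewrite // ler_wpM2l.
Qed.

Lemma in_dualB f g : in_dual ip f -> in_dual ip g -> in_dual ip (fun v => f v - g v).
Proof.
move=> f_dual g_dual.
have -> : (fun v => f v - g v) = (fun v => f v + (-1) * g v).
  by apply: funext => v; rewrite mulN1r.
exact: in_dualDZ.
Qed.

Lemma eventually_expr_le (q e : R) : 0 <= q -> q < 1 -> 0 < e ->
  \forall n \near \oo, q ^+ n <= e.
Proof.
move=> q_ge0 q_lt1 e_gt0.
have : \forall n \near \oo, `|q ^+ n| < e.
  by apply: cvgr0_norm_lt => //; apply: cvg_expr; rewrite ger0_norm.
by apply: filterS => n; rewrite ger0_norm ?exprn_ge0 // => /ltW.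
Qed.

(* [q^i (2 + lam) <= lam] makes the increment [<= 2 q^i e0] smaller than
   [lam] times the lower bound [(1 - q^i) e0] of the distance to [u 0]. *)
Lemma eventually_increment_le (q lam : R) (ws : V) (u : nat -> V) (c : nat -> R) :
  0 <= q -> q < 1 -> 0 < lam -> (forall i, 0 <= c i) ->
  (forall i, hnorm ip (ws - u i.+1) <= q * hnorm ip (ws - u i)) ->
  \forall i \near \oo,
    hnorm ip (u i - u i.+1) <= lam * (c i.+1 + hnorm ip (u i.+1 - u 0)).
Proof.
move=> q_ge0 q_lt1 lam_gt0 c_ge0 u_contr.
set e0 := hnorm ip (ws - u 0).
have e0_ge0 : 0 <= e0 by apply: hnorm_ge0.
have u_geo i : hnorm ip (ws - u i) <= q ^+ i * e0.
  elim: i => [|i IHi]; first by rewrite expr0 mul1r.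
  by rewrite exprS -mulrA; apply: le_trans (u_contr i) _; rewrite ler_wpM2l.
have eps_gt0 : 0 < lam / (2 + lam) by rewrite divr_gt0 //; lra.
apply: filterS (eventually_expr_le q_ge0 q_lt1 eps_gt0) => i.
rewrite ler_pdivlMr; last lra.
set x := q ^+ i => x_small.
have x_ge0 : 0 <= x by apply: exprn_ge0.
have qx_le : q * x <= x by rewrite ler_piMl // ltW.
have dist_Si : hnorm ip (ws - u i.+1) <= x * e0.
  by apply: le_trans (u_geo i.+1) _; rewrite exprS ler_wpM2r.
have incr : hnorm ip (u i - u i.+1) <= 2 * x * e0.
  have := hnorm_distD ws (u i) (u i.+1); rewrite (hnorm_distC (u i) ws).
  by have := u_geo i; rewrite -/x; lra.
have far : (1 - x) * e0 <= hnorm ip (u i.+1 - u 0).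
  by have := hnorm_distD (u i.+1) ws (u 0); rewrite -/e0; lra.
have key : 2 * x * e0 <= lam * ((1 - x) * e0).
  by have := ler_wpM2r e0_ge0 x_small; lra.
apply: le_trans incr (le_trans key _); rewrite ler_pM2l //.
by have := c_ge0 i.+1; lra.
Qed.

End InnerProductSpace.

Section ILoop.
Variables (R : realType) (V : lmodType R) (ip : V -> V -> R).
Variables (Tm : Type) (Elt : Tm -> finType) (refine : forall T : Tm, {set Elt T} -> Tm)
  (eta : forall T : Tm, Elt T -> V -> R)
  (A : V -> V -> R) (F : V -> R) (P : V -> R)
  (XS : Tm -> set V) (Psi : Tm -> (V -> R) -> V -> V) (q_alg : R)
  (T0 : Tm) (u0 : V) (theta Cmark lam_lin lam_alg delta M : R) (imin : nat).
Hypotheses (ip_hilbert : is_real_hilbert ip)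
  (A_dual : forall v, in_dual ip (A v)) (F_dual : in_dual ip F)
  (XS_fin : forall T, fin_dim_subspace (XS T))
  (XS_nested : forall T T', refines refine T T' -> XS T `<=` XS T')
  (q_ge0 : 0 <= q_alg) (q_lt1 : q_alg < 1)
  (Psi_contr : forall T (phi : V -> R), in_dual ip phi -> forall w, XS T w ->
     XS T (Psi T phi w) /\
     forall ws, XS T ws -> (forall v, XS T v -> ip ws v = phi v) ->
       hnorm ip (ws - Psi T phi w) <= q_alg * hnorm ip (ws - w))
  (lam_lin_ge0 : 0 <= lam_lin) (lam_alg_gt0 : 0 < lam_alg)
  (u0_XS : XS T0 u0).

Let u_ T w := alg_iter ip A F Psi delta T w.

Lemma in_dual_zar_rhs w : in_dual ip (zar_rhs ip A F delta w).
Proof.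
have [ipC ip_linear ip_gt0 ip_ge0 _] := ip_hilbert.
by apply: in_dualDZ; [exact: in_dual_ip | exact: in_dualB].
Qed.

Lemma alg_iter_XS T w i : XS T w -> XS T (u_ T w i).
Proof.
move=> w_XS; elim: i => [|i IHi] //=.
by have [] := Psi_contr (in_dual_zar_rhs w) IHi.
Qed.

Lemma reached_XS l k T w :
  reached ip refine eta A F P Psi T0 u0 theta Cmark lam_lin lam_alg delta M imin
    l k T w -> XS T w.
Proof.
elim=> // [l' k' T' w' i _ w'_XS _ _ | l' k' T' w' i Mk _ w'_XS _ _ _].
  exact: alg_iter_XS.
by apply: (XS_nested (refines_step (refines_refl refine _))); apply: alg_iter_XS.
Qed.

Lemma i_loop_terminates T w : XS T w ->
  \forall i \near \oo, i_stop ip eta A F Psi lam_lin lam_alg delta imin T w i.+1.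
Proof.
move=> w_XS.
have [ipC ip_linear ip_gt0 ip_ge0 _] := ip_hilbert.
have [ws ws_XS ws_repr] := fin_dim_riesz ipC ip_linear ip_gt0 (XS_fin T) (in_dual_zar_rhs w).1.
have u_contr i : hnorm ip (ws - u_ T w i.+1) <= q_alg * hnorm ip (ws - u_ T w i).
  by have [_ ->] := Psi_contr (in_dual_zar_rhs w) (alg_iter_XS i w_XS).
have eta_ge0 i : 0 <= lam_lin * eta_all eta T (u_ T w i).
  by rewrite mulr_ge0 ?sqrtr_ge0.
near=> i; split => //; first by apply: leqW; near: i; exact: nbhs_infty_ge.
near: i; exact: (eventually_increment_le ipC ip_linear ip_gt0 ip_ge0 q_ge0 q_lt1
  lam_alg_gt0 eta_ge0 u_contr).
Unshelve. all: end_near.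
Qed.

End ILoop.

Theorem lemma5
  (R : realType) (V : lmodType R) (ip : V -> V -> R)
  (Tm : Type) (Elt : Tm -> finType) (refine : forall T : Tm, {set Elt T} -> Tm)
  (eta : forall T : Tm, Elt T -> V -> R)
  (A : V -> V -> R) (F : V -> R) (P : V -> R) (alpha : R)
  (XS : Tm -> set V) (Psi : Tm -> (V -> R) -> V -> V) (q_alg : R)
  (T0 : Tm) (u0 : V)
  (theta Cmark lam_lin lam_alg delta : R) (imin : nat) :
  is_real_hilbert ip ->
  (* A : X -> X', F \in X', A 0 <> F *)
  (forall v, in_dual ip (A v)) ->
  in_dual ip F ->
  A 0 <> F ->
  (* (SM) *)
  0 < alpha ->
  (forall v w, alpha * hnorm ip (v - w) ^+ 2 <= A v (v - w) - A w (v - w)) ->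
  (* (LIP) *)
  (forall vt : R, 0 < vt -> exists L : R, 0 < L /\
     forall v w phi, Num.max (hnorm ip v) (hnorm ip (v - w)) <= vt ->
       A v phi - A w phi <= L * hnorm ip (v - w) * hnorm ip phi) ->
  (* (POT) *)
  (forall w v, (fun t : R => (P (w + t *: v) - P w) / t) @ (0 : R)^' --> (A w v : R)) ->
  (* discrete spaces: finite-dimensional, nested along refinement *)
  (forall T, fin_dim_subspace (XS T)) ->
  (forall T T', refines refine T T' -> XS T `<=` XS T') ->
  (* estimator *)
  (forall T (t : Elt T) v, XS T v -> 0 <= eta T t v) ->
  (* contractive algebraic solver *)
  0 < q_alg -> q_alg < 1 ->
  (forall T (phi : V -> R), in_dual ip phi -> forall w, XS T w ->
     XS T (Psi T phi w) /\
     forall ws, XS T ws -> (forall v, XS T v -> ip ws v = phi v) ->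
       hnorm ip (ws - Psi T phi w) <= q_alg * hnorm ip (ws - w)) ->
  (* parameters and initial guess *)
  0 < theta -> theta <= 1 -> 1 <= Cmark -> 0 < lam_lin -> 0 < lam_alg ->
  0 < delta ->
  XS T0 u0 ->
  hnorm ip u0 <= 2 * (dual_norm ip (fun v => F v - A 0 v) / alpha) ->
  (* conclusion: every i-loop that is entered terminates *)
  forall l k T w,
    reached ip refine eta A F P Psi T0 u0 theta Cmark lam_lin lam_alg delta
      (dual_norm ip (fun v => F v - A 0 v) / alpha) imin l k T w ->
    exists i, i_stop ip eta A F Psi lam_lin lam_alg delta imin T w i.
Proof.
move=> ip_hilbert A_dual F_dual _ _ _ _ _ XS_fin XS_nested _ q_gt0 q_lt1 Psi_contr
  _ _ _ lam_lin_gt0 lam_alg_gt0 _ u0_XS _ l k T w w_reached.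
have w_XS := reached_XS ip_hilbert A_dual F_dual XS_nested Psi_contr u0_XS w_reached.
have [N _ stops] := i_loop_terminates eta delta imin ip_hilbert A_dual F_dual XS_fin
  (ltW q_gt0) q_lt1 Psi_contr (ltW lam_lin_gt0) lam_alg_gt0 w_XS.
by exists N.+1; apply: stops => /=.
Qed.
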